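(* Let $(G,L,v)$ be a reachable triple with $\deg_G(v)=2$, and let $i\in[4]$ be a color. Then one of the following holds: (1) the vertex $v$ and its two neighbors form a triangle in $G$; (2) $P(G,L,v,i,D)\le\frac{13}{27}$ for all integers $D\ge2$.
   Context: Colors are $[4]=\{1,2,3,4\}$. A list-coloring instance $(G,L)$ is a finite simple graph $G=(V,E)$ with $L:V\to 2^{[4]}$. For a vertex $v$, $G_v$ is $G$ with $v$ and its incident edges removed, and $G_{v,w}=(G_v)_w$. If $v$ has neighbors $v_1,\dots,v_d$ (in a fixed order), then for $k\in[d]$ and a color $j$, $L_{k,j}$ is the list assignment on $G_v$ with $L_{k,j}(v_\ell)=L(v_\ell)\setminus\{j\}$ for $\ell<k$ and $L_{k,j}(u)=L(u)$ for all other vertices $u$ (so $L_{1,j}=L$). A triple $(G,L,v)$ with $v\in V$ is reachable if $\deg_G(u)\le3$ and $|L(u)|\ge\deg_G(u)+1$ for every $u\in V$, and moreover $\deg_G(v)\le2$ and $|L(v)|\ge\deg_G(v)+2$. The procedure $P(G,L,v,i,D)$ ($i\in[4]$, $D$ an integer) is defined recursively (empty products equal $1$): (a) If $i\notin L(v)$, return $0$. Otherwise, if $D\le 0$ or $\deg_G(v)=0$, return $1/|L(v)|$. (b) If $\deg_G(v)=1$ with neighbor $v_1$: let $x=P(G_v,L,v_1,i,D-1)$. If $|L(v)|=2$, say $L(v)=\{i,j\}$, let $y=P(G_v,L,v_1,j,D-1)$ and return $\frac{1-x}{2-x-y}$. If $|L(v)|=4$, return $\frac{1-x}{3}$. If $|L(v)|=3$,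 let $j$ be the unique color in $[4]\setminus L(v)$, $y=P(G_v,L,v_1,j,D-1)$, and return $\frac{1-x}{2+y}$. (c) If $\deg_G(v)=2$: order its neighbors $v_1,v_2$ so that $\deg_G(v_1)\ge\deg_G(v_2)$ and, if $\deg_G(v_1)=\deg_G(v_2)=1$, so that $i\notin L(v_1)$ implies $i\notin L(v_2)$. Let $u_1,\dots,u_{d_1}$ be the neighbors of $v_1$ in $G_v$ (fixed order) and for $k\in[d_1]$, $w\in[4]$ let $L'_{k,w}$ be the list assignment on $G_{v,v_1}$ with $L'_{k,w}(u_\ell)=L(u_\ell)\setminus\{w\}$ for $\ell<k$ and $L'_{k,w}(u)=L(u)$ otherwise. Set $x_{k,w}=P(G_{v,v_1},L'_{k,w},u_k,w,D-1)$ for $k\in[d_1]$, $w\in L(v_1)$. For $j\in L(v)$ set $f_j=0$ if $j\notin L(v_1)$ and otherwise $f_j=\frac{\prod_{k=1}^{d_1}(1-x_{k,j})}{\sum_{w\in L(v_1)}\prod_{k=1}^{d_1}(1-x_{k,w})}$, and set $y_j=P(G_v,L_{2,j},v_2,j,D-1)$. Return $\frac{(1-f_i)(1-y_i)}{\sum_{j\in L(v)}(1-f_j)(1-y_j)}$. (d) If $\deg_G(v)=3$ with neighbors $v_1,v_2,v_3$: for $j\in L(v)$ let $x_j=P(G_v,L_{1,j},v_1,j,D-1)$, $y_j=P(G_v,L_{2,j},v_2,j,D-1)$, $z_j=P(G_v,L_{3,j},v_3,j,D-1)$, and return $\frac{(1-x_i)(1-y_i)(1-z_i)}{\sum_{j\in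 L(v)}(1-x_j)(1-y_j)(1-z_j)}$. For reachable triples, all recursive calls are again on reachable triples and case (d) never occurs. *)

From HB Require Import structures.
From mathcomp Require Import all_boot all_order all_algebra.
Set Implicit Arguments. Unset Strict Implicit. Unset Printing Implicit Defensive.
Import Order.TTheory GRing.Theory Num.Theory.
Local Open Scope ring_scope.

(* A graph is the subgraph induced on a vertex set S : {set T} by a
   symmetric irreflexive relation e : rel T.
   Removing a vertex v from G is S :\ v.  The "fixed order" of neighbors
   is the enumeration order of the finType T. *)

Section Procedure.
Variable R : realFieldType.
Variable T : finType.
Variable e : rel T.

Definition nbrs (S : {set T}) (u : T) : seq T :=
  [seq w <- enum T | (w \in S) && e u w].

Definition deg (S : {set T}) (u : T) : nat := size (nbrs S u).

(* L_{k,j}: remove color j from the lists of the first k vertices of ns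
   (k is the 0-based index of the k+1-th neighbor) *)
Definition restr (L : T -> {set 'I_4}) (ns : seq T) (k : nat) (j : 'I_4)
  : T -> {set 'I_4} :=
  fun u => if u \in take k ns then L u :\ j else L u.

Fixpoint Pn (n : nat) (S : {set T}) (L : T -> {set 'I_4}) (v : T)
  (i : 'I_4) {struct n} : R :=
  if i \notin L v then 0 else
  match n with
  | 0%N => (#|L v|%:R)^-1
  | n'.+1 =>
    let ns := nbrs S v in
    let Sv := S :\ v in
    match ns with
    | [::] => (#|L v|%:R)^-1
    | [:: v1] =>
        let x := Pn n' Sv L v1 i in
        if #|L v| == 2%N then
          let j := odflt i [pick j in L v :\ i] in
          let y := Pn n' Sv L v1 j in
          (1 - x) / (2%:R - x - y)
        else if #|L v| == 4%N then (1 - x) / 3%:R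
        else if #|L v| == 3%N then
          let j := odflt i [pick j in ~: L v] in
          let y := Pn n' Sv L v1 j in
          (1 - x) / (2%:R + y)
        else 0
    | [:: a; b] =>
        let swap := (deg S a < deg S b)%N ||
          [&& deg S a == 1%N, deg S b == 1%N, i \notin L a & i \in L b] in
        let v1 := if swap then b else a in
        let v2 := if swap then a else b in
        let us := nbrs Sv v1 in
        let Svv1 := Sv :\ v1 in
        let g (w : 'I_4) : R :=
          \prod_(k < size us)
            (1 - Pn n' Svv1 (restr L us k w) (nth v us k) w) in
        let f (j : 'I_4) : R :=
          if j \in L v1 then g j / \sum_(w in L v1) g w else 0 in
        let y (j : 'I_4) : R := Pn n' Sv (restr L [:: v1; v2] 1 j) v2 j in
        (1 - f i) * (1 - y i) / \sum_(j in L v) (1 - f j) * (1 - y j)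
    | [:: a; b; c] =>
        let z (k : nat) (j : 'I_4) : R :=
          Pn n' Sv (restr L ns k j) (nth v ns k) j in
        (1 - z 0%N i) * (1 - z 1%N i) * (1 - z 2%N i) /
          \sum_(j in L v) (1 - z 0%N j) * (1 - z 1%N j) * (1 - z 2%N j)
    | _ => 0
    end
  end.

(* P(G, L, v, i, D) with D an integer: D <= 0 is the base case *)
Definition P (S : {set T}) (L : T -> {set 'I_4}) (v : T) (i : 'I_4)
  (D : int) : R :=
  Pn (if D is Posz n then n else 0%N) S L v i.

Definition reachable (S : {set T}) (L : T -> {set 'I_4}) (v : T) : Prop :=
  v \in S /\
  (forall u, u \in S -> (deg S u <= 3)%N /\ (deg S u + 1 <= #|L u|)%N) /\
  (deg S v <= 2)%N /\ (deg S v + 2 <= #|L v|)%N.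

Definition triangle_at (S : {set T}) (v : T) : Prop :=
  exists v1 v2, [/\ v1 \in nbrs S v, v2 \in nbrs S v, v1 != v2 & e v1 v2].

End Procedure.

From HB Require Import structures.
From mathcomp Require Import all_boot all_order all_algebra.
From mathcomp Require Import lra zify.
Import Order.TTheory GRing.Theory Num.Theory.
Set Implicit Arguments. Unset Strict Implicit. Unset Printing Implicit Defensive.
Local Open Scope ring_scope.

(* By induction on D, every estimate P at a reachable vertex is at most 1/2,
   and at a color of its list at least 1/2, 1/5 or 1/13 according as the list
   has 2, 3 or 4 colors.  At a vertex v of degree 2 the estimate is
   X / (X + Y) with X = (1 - f_i)(1 - y_i) and Y = sum_(j != i) (1 - f_j)(1 - y_j),
   where f is a probability vector and 0 <= y <= 1/2; it is at most 13/27 iff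
   14 X <= 13 Y.  This holds when i is in L(v1), because then f_i >= 1/16, and
   when i is in L(v2), because then y_i >= 1/13.  Otherwise f_i = y_i = 0, and
   as v1, v2 are not adjacent and deg v2 <= deg v1 <= 2, the vertex v2 is a leaf
   of G_v or has a single further neighbour w; the lower bounds at w keep the
   y_j (j != i) far enough below 1/2. *)

Lemma card_le4 (A : {set 'I_4}) : (#|A| <= 4)%N.
Proof. by have := max_card A; rewrite card_ord. Qed.

Lemma card_le3_notin (A : {set 'I_4}) i : i \notin A -> (#|A| <= 3)%N.
Proof.
move=> iA; have := cardsC A; rewrite card_ord.
have : (0 < #|~: A|)%N by apply/card_gt0P; exists i; rewrite inE.
lia.
Qed.

Lemma card3_mem (A : {set 'I_4}) i j : i \notin A -> #|A| = 3%N -> j != i -> j \in A.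
Proof.
move=> iA A3 ji; apply: contraT => jA.
have := cardsC A; rewrite card_ord A3 (cardsD1 i) inE iA.
have : (0 < #|~: A :\ i|)%N by apply/card_gt0P; exists j; rewrite !inE ji.
lia.
Qed.

Lemma card4_mem (A : {set 'I_4}) j : #|A| = 4%N -> j \in A.
Proof.
move=> A4; apply: contraT => jA; have := cardsC A; rewrite card_ord A4.
have : (0 < #|~: A|)%N by apply/card_gt0P; exists j; rewrite inE.
lia.
Qed.

Lemma sum_card4 (V : nmodType) (A : {set 'I_4}) (F : 'I_4 -> V) :
  #|A| = 4%N -> \sum_(j in A) F j = \sum_j F j.
Proof. by move=> A4; apply: eq_bigl => j; rewrite card4_mem. Qed.

Lemma nth_notin_take (A : eqType) (s : seq A) x0 k :
  uniq s -> (k < size s)%N -> nth x0 s k \notin take k s.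
Proof. by move=> s_uniq k_lt; rewrite in_take ?mem_nth // index_uniq // ltnn. Qed.

Section NormalizedWeights.
Variables (R : realFieldType) (I : finType) (A : {set I}) (g : I -> R) (lo : R).
Hypotheses (lo_gt0 : 0 < lo) (g_ge : forall w, lo <= g w) (g_le1 : forall w, g w <= 1).

Let G := \sum_(w in A) g w.
Let s := (#|A|.-1)%:R * lo.

Lemma sum_weights_ge j : j \in A -> g j + s <= G.
Proof.
move=> jA; rewrite /G (big_setD1 j) //= lerD2l /s (cardsD1 j A) jA /= -sum1_card.
by rewrite natr_sum mulr_suml; apply: ler_sum => w _; rewrite mul1r.
Qed.

Lemma sum_weights_gt0 j : j \in A -> 0 < G.
Proof.
move=> jA; have := sum_weights_ge jA; have := g_ge j.
have : 0 <= s by rewrite /s mulr_ge0 // ltW.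
have := lo_gt0; clearbody s G; lra.
Qed.

Lemma sum_weights_le_card : G <= #|A|%:R.
Proof. by rewrite -sum1_card natr_sum; apply: ler_sum. Qed.

Lemma normalized_weight_le j : j \in A -> g j / G * (1 + s) <= 1.
Proof.
move=> jA; have G_gt0 := sum_weights_gt0 jA.
rewrite mulrAC ler_pdivrMr // mul1r.
have := sum_weights_ge jA; have := g_le1 j; have := g_ge j.
have : 0 <= s by rewrite /s mulr_ge0 // ltW.
nra.
Qed.

Lemma normalized_weight_ge j : j \in A -> lo / #|A|%:R <= g j / G.
Proof.
move=> jA; have G_gt0 := sum_weights_gt0 jA.
have A_gt0 : 0 < #|A|%:R :> R by rewrite ltr0n; apply/card_gt0P; exists j.
rewrite ler_pdivlMr // mulrAC ler_pdivrMr //.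
apply: le_trans (_ : lo * #|A|%:R <= _); first by rewrite ler_pM2l // sum_weights_le_card.
by rewrite ler_pM2r // g_ge.
Qed.

Lemma sum_normalized_weights :
  A != set0 -> \sum_j (if j \in A then g j / G else 0) = 1.
Proof.
case/set0Pn => j jA; rewrite -big_mkcond /= -mulr_suml mulfV //.
by rewrite gt_eqF // (sum_weights_gt0 jA).
Qed.
End NormalizedWeights.

Lemma weight_spread (R : realFieldType) (m k : nat) : (m + 2 <= k <= 4)%N ->
  [/\ 1/4 <= (1/2 : R) ^+ m, 3/4 <= (k.-1)%:R * (1/2 : R) ^+ m &
      (k <= 3)%N -> 1 <= (k.-1)%:R * (1/2 : R) ^+ m].
Proof.
move=> /andP[mk k4]; have : (m <= 2)%N by lia.
case: m mk => [|[|[|m]]] // mk _; case: k mk k4 => [|[|[|[|[|k]]]]] // _ _;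
  by rewrite /= ?expr0 ?expr1 ?expr2; split; [lra | lra | move=> // _; lra].
Qed.

Section Balance.
Variables (R : realFieldType) (f y : 'I_4 -> R).
Hypotheses (f_ge0 : forall j, 0 <= f j) (f_sum : \sum_j f j = 1).
Hypotheses (y_ge0 : forall j, 0 <= y j) (y_le_half : forall j, y j <= 1/2).

(* 14 X <= 13 Y is X / (X + Y) <= 13/27. *)
Definition balanced i :=
  14 * ((1 - f i) * (1 - y i)) <= 13 * \sum_(j | j != i) (1 - f j) * (1 - y j).

Lemma f_le1 j : f j <= 1.
Proof. by rewrite -f_sum (bigD1 j) //= lerDl; apply: sumr_ge0. Qed.

Lemma sum_compl_f i : \sum_(j | j != i) (1 - f j) = 2 + f i.
Proof.
by have := f_sum; rewrite (bigD1 i) //= sumrB sumr_const cardC1 card_ord /=; lra.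
Qed.

Lemma sum_compl_ge_uniform i t : 0 <= t -> (forall j, j != i -> t <= 1 - y j) ->
  t * (2 + f i) <= \sum_(j | j != i) (1 - f j) * (1 - y j).
Proof.
move=> t_ge0 t_le; rewrite -sum_compl_f mulr_sumr; apply: ler_sum => j ji.
by rewrite mulrC ler_wpM2l ?t_le // subr_ge0 f_le1.
Qed.

Lemma sum_compl_ge_bonus i b (B : {set 'I_4}) :
    (forall j, f j <= 1/2) -> f i = 0 -> 0 <= b ->
    (forall j, j != i -> 1/2 + b * (j \in B)%:R <= 1 - y j) ->
  1 + b / 2 * #|B :\ i|%:R <= \sum_(j | j != i) (1 - f j) * (1 - y j).
Proof.
move=> f_le fi b_ge0 y_le.
apply: (@le_trans _ _ (\sum_(j | j != i) (1 - f j) * (1/2 + b * (j \in B)%:R))); last first.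
  by apply: ler_sum => j ji; rewrite ler_wpM2l ?y_le // subr_ge0 f_le1.
under eq_bigr do rewrite mulrDr.
rewrite big_split /= -mulr_suml sum_compl_f fi.
suff : b / 2 * #|B :\ i|%:R <= \sum_(j | j != i) (1 - f j) * (b * (j \in B)%:R) by lra.
have -> : #|B :\ i|%:R = \sum_(j | j != i) (j \in B)%:R :> R.
  rewrite -sum1_card natr_sum [LHS]big_mkcond [RHS]big_mkcond /=.
  by apply: eq_bigr => j _; rewrite in_setD1; case: (j != i); case: (j \in B).
rewrite mulr_sumr; apply: ler_sum => j _.
have := f_le j; have := f_ge0 j; case: (j \in B) => /=; nra.
Qed.

Lemma sum_compl_bounds i :
  (2 + f i) / 2 <= \sum_(j | j != i) (1 - f j) * (1 - y j) <= 2 + f i.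
Proof.
apply/andP; split.
  rewrite mulrC -[2^-1]div1r; apply: sum_compl_ge_uniform => [|j _]; first lra.
  by have := y_le_half j; lra.
rewrite -sum_compl_f; apply: ler_sum => j _.
by rewrite ler_piMr ?subr_ge0 ?f_le1 // lerBlDr lerDl.
Qed.

Lemma mass_bounds i : (1 - f i) / 2 <= (1 - f i) * (1 - y i) <= 1 - f i.
Proof.
have := f_le1 i; have := y_le_half i; have := y_ge0 i.
by move=> *; apply/andP; split; nra.
Qed.

Lemma ratio_bounds c : (forall j, f j <= 4/7) ->
  1/13 <= (1 - f c) * (1 - y c) / \sum_j (1 - f j) * (1 - y j) <= 1/2.
Proof.
move=> f_le; rewrite (bigD1 c) //=.
have /andP[X_ge X_le] := mass_bounds c; have /andP[Y_ge Y_le] := sum_compl_bounds c.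
have := f_le c; have := f_ge0 c.
set X := (1 - f c) * (1 - y c) in X_ge X_le *; set Y := \sum_(j | _) _ in Y_ge Y_le *.
clearbody X Y.
have XY_gt0 : 0 < X + Y by lra.
by move=> *; rewrite ler_pdivlMr // ler_pdivrMr //; apply/andP; split; lra.
Qed.

Lemma ratio_le_13_27 c : balanced c ->
  (1 - f c) * (1 - y c) / \sum_j (1 - f j) * (1 - y j) <= 13%:R / 27%:R.
Proof.
rewrite /balanced => bal; rewrite (bigD1 c) //=.
have /andP[X_ge _] := mass_bounds c; have /andP[Y_ge _] := sum_compl_bounds c.
have f_le := f_le1 c; have f_ge := f_ge0 c.
set X := (1 - f c) * (1 - y c) in X_ge bal *.
set Y := \sum_(j | _) _ in Y_ge bal *.
clearbody X Y.
have XY_gt0 : 0 < X + Y by lra.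
rewrite ler_pdivrMr //; lra.
Qed.

Lemma balanced_of_f_ge i : 1/16 <= f i -> balanced i.
Proof.
rewrite /balanced => f_ge.
have /andP[_ X_le] := mass_bounds i; have /andP[Y_ge _] := sum_compl_bounds i.
lra.
Qed.

Lemma balanced_of_y_ge i : 1/13 <= y i -> balanced i.
Proof.
rewrite /balanced => y_ge.
have /andP[Y_ge _] := sum_compl_bounds i.
have : (1 - f i) * (1 - y i) <= (1 - f i) * (12/13).
  by rewrite ler_wpM2l ?subr_ge0 ?f_le1 //; lra.
have := f_ge0 i; lra.
Qed.

Lemma balanced_of_uniform i t : f i = 0 -> y i = 0 -> 7 <= 13 * t ->
  (forall j, j != i -> t <= 1 - y j) -> balanced i.
Proof.
rewrite /balanced => fi yi t_ge y_le.
have t_ge0 : 0 <= t by lra.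
have := sum_compl_ge_uniform t_ge0 y_le; rewrite fi yi; lra.
Qed.

Lemma balanced_of_bonus i b (B : {set 'I_4}) :
    (forall j, f j <= 1/2) -> f i = 0 -> y i = 0 -> 0 <= b ->
    2 <= 13 * b * #|B :\ i|%:R ->
    (forall j, j != i -> 1/2 + b * (j \in B)%:R <= 1 - y j) -> balanced i.
Proof.
rewrite /balanced => f_le fi yi b_ge0 bB y_le.
have := sum_compl_ge_bonus f_le fi b_ge0 y_le; rewrite fi yi; lra.
Qed.
End Balance.

Section Graph.
Variables (T : finType) (e : rel T).
Hypotheses (e_sym : symmetric e) (e_irr : irreflexive e).
Implicit Types (S : {set T}) (L : T -> {set 'I_4}).

Lemma mem_nbrs S u w : (w \in nbrs e S u) = (w \in S) && e u w.
Proof. by rewrite mem_filter mem_enum andbT. Qed.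

Lemma nbrs_uniq S u : uniq (nbrs e S u).
Proof. by rewrite filter_uniq // enum_uniq. Qed.

Lemma nbrs_setD1 S u v : nbrs e (S :\ v) u = [seq w <- nbrs e S u | w != v].
Proof.
rewrite /nbrs -[RHS]filter_predI; apply: eq_filter => w /=.
by rewrite in_setD1 andbA [(_ != _) && _]andbC.
Qed.

Lemma deg_setD1_le S u v : (deg e (S :\ v) u <= deg e S u)%N.
Proof. by rewrite /deg nbrs_setD1 size_filter count_size. Qed.

Lemma deg_setD1 S u v : v \in nbrs e S u -> deg e S u = (deg e (S :\ v) u).+1.
Proof.
move=> vN; rewrite /deg nbrs_setD1 -(count_predC (pred1 v) (nbrs e S u)).
by rewrite (count_uniq_mem v (nbrs_uniq S u)) vN size_filter.
Qed.

Lemma mem_nbrs_sym S u w : u \in S -> w \in nbrs e S u -> u \in nbrs e S w.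
Proof. by move=> uS; rewrite !mem_nbrs uS e_sym => /andP[]. Qed.

Lemma nbrs_neq S u w : w \in nbrs e S u -> w != u.
Proof. by rewrite mem_nbrs; apply: contraTneq => ->; rewrite e_irr andbF. Qed.

Definition admissible S L :=
  forall u, u \in S -> (deg e S u <= 3)%N /\ (deg e S u + 1 <= #|L u|)%N.

Lemma admissible_remove S L (L' : T -> {set 'I_4}) v : admissible S L -> v \in S ->
    (forall x, x \notin nbrs e S v -> L' x = L x) ->
    (forall x, #|L x| <= #|L' x| + 1)%N ->
  admissible (S :\ v) L'.
Proof.
move=> adm vS L'_out L'_card x; rewrite in_setD1 => /andP[_ xS].
have [deg_le card_ge] := adm x xS.
have [xN|xN] := boolP (x \in nbrs e S v); last first.
  by rewrite L'_out //; have := deg_setD1_le S x v; lia.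
rewrite (deg_setD1 (mem_nbrs_sym vS xN)) in deg_le card_ge.
by have := L'_card x; lia.
Qed.

Lemma reachable_remove S L (L' : T -> {set 'I_4}) v u : admissible S L -> v \in S ->
    (forall x, x \notin nbrs e S v -> L' x = L x) ->
    (forall x, #|L x| <= #|L' x| + 1)%N ->
    u \in nbrs e S v -> L' u = L u ->
  reachable e (S :\ v) L' u.
Proof.
move=> adm vS L'_out L'_card uN L'u.
have uS : u \in S by move: uN; rewrite mem_nbrs => /andP[].
have [deg_le card_ge] := adm u uS.
rewrite (deg_setD1 (mem_nbrs_sym vS uN)) in deg_le card_ge.
split; first by rewrite in_setD1 uS (nbrs_neq uN).
split; first exact: admissible_remove adm vS L'_out L'_card.
by rewrite L'u; lia.
Qed.

Lemma admissible_setD1 S L v : admissible S L -> v \in S -> admissible (S :\ v) L.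
Proof.
by move=> adm vS; apply: (admissible_remove adm vS) => // x; exact: leq_addr.
Qed.

Lemma reachable_nbr S L v u : admissible S L -> v \in S -> u \in nbrs e S v ->
  reachable e (S :\ v) L u.
Proof.
by move=> adm vS uN; apply: (reachable_remove adm vS) => // x; exact: leq_addr.
Qed.

Lemma restr_notin L ns k j x : x \notin take k ns -> restr L ns k j x = L x.
Proof. by rewrite /restr => /negbTE ->. Qed.

Lemma card_restr L ns k j x : (#|L x| <= #|restr L ns k j x| + 1)%N.
Proof.
rewrite /restr; case: ifP => _; last exact: leq_addr.
by rewrite (cardsD1 j (L x)) addnC leq_add2l leq_b1.
Qed.

Lemma admissible_restr S L v ns k j : admissible S L -> v \in S ->
  {subset ns <= nbrs e S v} -> admissible (S :\ v) (restr L ns k j).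
Proof.
move=> adm vS ns_sub; apply: (admissible_remove adm vS) => [x xN|x]; last exact: card_restr.
by apply: restr_notin; apply: contra xN => /mem_take; apply: ns_sub.
Qed.

Lemma reachable_restr S L v ns k j u : admissible S L -> v \in S ->
    {subset ns <= nbrs e S v} -> u \in ns -> u \notin take k ns ->
  reachable e (S :\ v) (restr L ns k j) u.
Proof.
move=> adm vS ns_sub uns u_take.
apply: (reachable_remove adm vS) => [x xN|x||]; last 2 first.
- exact: ns_sub.
- exact: restr_notin.
- by apply: restr_notin; apply: contra xN => /mem_take; apply: ns_sub.
- exact: card_restr.
Qed.

End Graph.

Section Procedure.
Variables (R : realFieldType) (T : finType) (e : rel T).
Hypotheses (e_sym : symmetric e) (e_irr : irreflexive e).
Implicit Types (S : {set T}) (L : T -> {set 'I_4}).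

Lemma Pn_notin n S L u c : c \notin L u -> Pn R e n S L u c = 0.
Proof. by move=> cL; case: n => [|n] /=; rewrite cL. Qed.

Lemma Pn_nil n S L u c : c \in L u -> nbrs e S u = [::] ->
  Pn R e n S L u c = #|L u|%:R^-1.
Proof. by move=> cL uN; case: n => [|n] /=; rewrite cL ?uN. Qed.

Lemma Pn0 S L u c : c \in L u -> Pn R e 0 S L u c = #|L u|%:R^-1.
Proof. by move=> cL /=; rewrite cL. Qed.

Lemma Pn_deg1_card4 n S L u a c : c \in L u -> nbrs e S u = [:: a] ->
  #|L u| = 4%N -> Pn R e n.+1 S L u c = (1 - Pn R e n (S :\ u) L a c) / 3.
Proof. by move=> cL uN Lu4; rewrite /= cL uN Lu4. Qed.

Lemma Pn_deg1_card3 n S L u a c d : c \in L u -> nbrs e S u = [:: a] ->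
    #|L u| = 3%N -> d \notin L u ->
  Pn R e n.+1 S L u c =
    (1 - Pn R e n (S :\ u) L a c) / (2 + Pn R e n (S :\ u) L a d).
Proof.
move=> cL uN Lu3 dL; rewrite /= cL uN Lu3 /=.
case: pickP => [j|/(_ d)]; rewrite inE ?dL // => jL.
suff -> : j = d by [].
by apply/eqP; apply: contraNT jL; apply: card3_mem.
Qed.

(* With v1, v2 ordered as in case (c), these are the product
   prod_k (1 - x_(k,w)), the f_j and the y_j of that case. *)
Definition nbr_weight n S L u v1 (w : 'I_4) : R :=
  \prod_(k < size (nbrs e (S :\ u) v1))
    (1 - Pn R e n (S :\ u :\ v1) (restr L (nbrs e (S :\ u) v1) k w)
           (nth u (nbrs e (S :\ u) v1) k) w).

Definition f_est n S L u v1 (j : 'I_4) : R :=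
  if j \in L v1 then nbr_weight n S L u v1 j / \sum_(w in L v1) nbr_weight n S L u v1 w
  else 0.

Definition y_est n S L u v1 v2 (j : 'I_4) : R :=
  Pn R e n (S :\ u) (restr L [:: v1; v2] 1 j) v2 j.

Lemma Pn_deg2 S L u c a b : c \in L u -> nbrs e S u = [:: a; b] ->
  exists v1 v2, [/\ v1 \in nbrs e S u, v2 \in nbrs e S u, v1 != v2,
    (deg e S v2 <= deg e S v1)%N &
    forall n, Pn R e n.+1 S L u c =
      (1 - f_est n S L u v1 c) * (1 - y_est n S L u v1 v2 c) /
      \sum_(j in L u) (1 - f_est n S L u v1 j) * (1 - y_est n S L u v1 v2 j)].
Proof.
move=> cL uN.
have ab : a != b by have := nbrs_uniq e S u; rewrite uN /= inE andbT.
have [aN bN] : a \in nbrs e S u /\ b \in nbrs e S u by rewrite uN !inE !eqxx orbT.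
have [sw|nsw] := boolP ((deg e S a < deg e S b)%N ||
  [&& deg e S a == 1%N, deg e S b == 1%N, c \notin L a & c \in L b]).
- exists b, a; split; rewrite 1?eq_sym //; last by move=> n; rewrite /= cL uN sw.
  by case/orP: sw => [/ltnW //|/and4P[/eqP -> /eqP -> _ _]].
- exists a, b; split => //; last by move=> n; rewrite /= cL uN (negbTE nsw).
  by case/norP: nsw; rewrite -leqNgt.
Qed.

Definition min_prob (k : nat) : R :=
  if k == 2%N then 1/2 else if k == 3%N then 1/5 else 1/13.

Lemma min_prob_ge k : 1/13 <= min_prob k.
Proof. by rewrite /min_prob; case: ifP => _; [|case: ifP => _]; lra. Qed.

Lemma min_prob_ge_small k : (2 <= k <= 3)%N -> 1/5 <= min_prob k.
Proof. by case: k => [|[|[|[|k]]]] //= _; rewrite /min_prob /=; lra. Qed.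

Lemma inv_card_bounds k : (2 <= k <= 4)%N -> min_prob k <= (k%:R : R)^-1 <= 1/2.
Proof. by case: k => [|[|[|[|[|k]]]]] //= _; rewrite /min_prob /=; lra. Qed.

Definition Pn_bounded n :=
  forall S L u c, reachable e S L u -> 0 <= Pn R e n S L u c <= 1/2.

Lemma nbr_weight_bounds n S L u v1 w : Pn_bounded n ->
    admissible e (S :\ u) L -> v1 \in S :\ u ->
  (1/2) ^+ deg e (S :\ u) v1 <= nbr_weight n S L u v1 w <= 1.
Proof.
move=> bnd adm v1S; rewrite /nbr_weight /deg.
set us := nbrs e (S :\ u) v1.
have factor (k : 'I_(size us)) :
    1/2 <= 1 - Pn R e n (S :\ u :\ v1) (restr L us k w) (nth u us k) w <= 1.
  have k_lt := ltn_ord k.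
  have := bnd _ _ _ w (reachable_restr e_sym e_irr w adm v1S (fun x xN => xN)
                         (mem_nth u k_lt) (nth_notin_take u (nbrs_uniq e _ _) k_lt)).
  by move=> /andP[? ?]; apply/andP; split; lra.
apply/andP; split.
  rewrite -[X in _ ^+ X]card_ord -prodr_const; apply: ler_prod => k _.
  by have /andP[? ?] := factor k; apply/andP; split => //; lra.
by apply: prodr_ile1 => k _; have /andP[? ?] := factor k; apply/andP; split => //; lra.
Qed.

Lemma f_est_bounds n S L u v1 : Pn_bounded n -> admissible e S L -> u \in S ->
    v1 \in nbrs e S u ->
  [/\ forall j, 0 <= f_est n S L u v1 j <= 4/7,
      \sum_j f_est n S L u v1 j = 1,
      (#|L v1| <= 3)%N -> forall j, f_est n S L u v1 j <= 1/2 &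
      forall j, j \in L v1 -> 1/16 <= f_est n S L u v1 j].
Proof.
move=> bnd adm uS v1N.
(* A weight is a product of deg v1 <= 2 factors in [1/2, 1] (degree in G_u),
   and L v1 has at least deg v1 + 2 colors. *)
have [v1S [_ [_ card_ge]]] := reachable_nbr e_sym e_irr adm uS v1N.
have adm_u := admissible_setD1 e_sym adm uS.
have [lo_ge spread spread3] := @weight_spread R (deg e (S :\ u) v1) #|L v1|
  (ltac:(by rewrite card_ge card_le4)).
have g_bnd w := nbr_weight_bounds w bnd adm_u v1S.
set lo := (1/2) ^+ _ in lo_ge spread spread3 g_bnd.
set g := nbr_weight n S L u v1 in g_bnd *.
have g_ge w : lo <= g w by have /andP[] := g_bnd w.
have g_le1 w : g w <= 1 by have /andP[] := g_bnd w.
clearbody lo.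
have lo_gt0 : 0 < lo by lra.
have g_ge0 w : 0 <= g w by apply: le_trans (g_ge w); apply: ltW.
have f_ge0 j : 0 <= f_est n S L u v1 j.
  by rewrite /f_est; case: ifP => // _; rewrite divr_ge0 ?sumr_ge0.
have f_le j c : c <= (#|L v1|.-1)%:R * lo -> f_est n S L u v1 j * (1 + c) <= 1.
  move=> c_le; rewrite /f_est; case: ifP => jL; last by rewrite mul0r ler01.
  apply: le_trans (normalized_weight_le lo_gt0 g_ge g_le1 jL).
  by rewrite ler_wpM2l ?lerD2l // divr_ge0 ?sumr_ge0.
split.
- by move=> j; have := f_le j _ spread; have := f_ge0 j; move=> *; apply/andP; split; lra.
- rewrite /f_est; apply: (sum_normalized_weights lo_gt0 g_ge).
  by rewrite -card_gt0; apply: leq_trans card_ge; rewrite addn2.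
- by move=> L3 j; have := f_le j _ (spread3 L3); have := f_ge0 j; lra.
- move=> j jL; rewrite /f_est jL -/g.
  apply: le_trans (normalized_weight_ge lo_gt0 g_ge g_le1 jL).
  have L_gt0 : 0 < #|L v1|%:R :> R by rewrite ltr0n; apply/card_gt0P; exists j.
  have : #|L v1|%:R <= 4 :> R by rewrite ler_nat card_le4.
  by rewrite ler_pdivlMr //; lra.
Qed.

Lemma y_est_reachable S L u v1 v2 j : admissible e S L -> u \in S ->
    v1 \in nbrs e S u -> v2 \in nbrs e S u -> v1 != v2 ->
  reachable e (S :\ u) (restr L [:: v1; v2] 1 j) v2.
Proof.
move=> adm uS v1N v2N v12; apply: (reachable_restr e_sym e_irr j adm uS).
- by move=> x; rewrite !inE => /orP[] /eqP ->.
- by rewrite !inE eqxx orbT.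
- by rewrite /= inE eq_sym.
Qed.

Lemma reachable_card S L u : reachable e S L u -> (2 <= #|L u| <= 4)%N.
Proof. by case=> _ [_ [_ card_ge]]; rewrite card_le4 andbT; lia. Qed.

Lemma Pn0_bounds S L u c : reachable e S L u -> c \in L u ->
  min_prob #|L u| <= Pn R e 0 S L u c <= 1/2.
Proof. by move=> reach cL; rewrite Pn0 // inv_card_bounds // (reachable_card reach). Qed.

Lemma Pn_succ_bounds n S L u c : Pn_bounded n -> reachable e S L u -> c \in L u ->
  min_prob #|L u| <= Pn R e n.+1 S L u c <= 1/2.
Proof.
move=> bnd reach cL; have [uS [adm [deg_le card_ge]]] := reach.
have card_le := card_le4 (L u).
case uN: (nbrs e S u) => [|a [|b [|? ?]]]; last by move: deg_le; rewrite /deg uN.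
- by rewrite Pn_nil // inv_card_bounds // (reachable_card reach).
- have aN : a \in nbrs e S u by rewrite uN inE.
  have reach_a := reachable_nbr e_sym e_irr adm uS aN.
  have /andP[x_ge x_le] := bnd _ _ _ c reach_a.
  have Lu_ge : (3 <= #|L u|)%N by move: card_ge; rewrite /deg uN.
  have [Lu3|Lu4] : #|L u| = 3%N \/ #|L u| = 4%N by lia.
  + have /set0Pn[d] : ~: L u != set0.
      by rewrite -card_gt0; have := cardsC (L u); rewrite card_ord Lu3; lia.
    rewrite inE => dL; have /andP[z_ge z_le] := bnd _ _ _ d reach_a.
    rewrite (Pn_deg1_card3 n cL uN Lu3 dL) Lu3 /min_prob /=.
    by apply/andP; split; [rewrite ler_pdivlMr | rewrite ler_pdivrMr]; lra.
  + by rewrite (Pn_deg1_card4 n cL uN Lu4) Lu4 /min_prob /=; apply/andP; split; lra.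
- have Lu_ge : (4 <= #|L u|)%N by move: card_ge; rewrite /deg uN.
  have Lu4 : #|L u| = 4%N by lia.
  have [v1 [v2 [v1N v2N v12 _ ->]]] := Pn_deg2 cL uN.
  have [f_bnd f_sum _ _] := f_est_bounds bnd adm uS v1N.
  have y_bnd j := bnd _ _ _ j (y_est_reachable j adm uS v1N v2N v12).
  rewrite (sum_card4 _ Lu4) Lu4 /min_prob /=.
  apply: ratio_bounds => // j;
    by [have /andP[] := f_bnd j | have /andP[] := y_bnd j].
Qed.

Lemma Pn_bounded_of n :
    (forall S L u c, reachable e S L u -> c \in L u ->
       min_prob #|L u| <= Pn R e n S L u c <= 1/2) ->
  Pn_bounded n.
Proof.
move=> bnd S L u c reach; have [cL|cL] := boolP (c \in L u).
  have /andP[lo hi] := bnd _ _ _ _ reach cL; have := min_prob_ge #|L u|.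
  by rewrite hi andbT; lra.
by rewrite Pn_notin // lexx; lra.
Qed.

Lemma Pn_bounds n S L u c : reachable e S L u -> c \in L u ->
  min_prob #|L u| <= Pn R e n S L u c <= 1/2.
Proof.
elim: n S L u c => [|n IH] S L u c; first exact: Pn0_bounds.
exact/Pn_succ_bounds/Pn_bounded_of.
Qed.

Lemma Pn_range n : Pn_bounded n.
Proof. exact/Pn_bounded_of/Pn_bounds. Qed.

End Procedure.

Section Deg2.
Variables (R : realFieldType) (T : finType) (e : rel T).
Hypotheses (e_sym : symmetric e) (e_irr : irreflexive e).
Variables (n : nat) (S : {set T}) (L : T -> {set 'I_4}) (v v1 v2 : T) (i : 'I_4).
Hypotheses (adm : admissible e S L) (vS : v \in S).
Hypotheses (v1N : v1 \in nbrs e S v) (v2N : v2 \in nbrs e S v) (v12 : v1 != v2).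
Hypotheses (nadj : ~~ e v1 v2) (deg21 : (deg e S v2 <= deg e S v1)%N).

Let f := f_est R e n.+1 S L v v1.
Let y := y_est R e n.+1 S L v v1 v2.

Let f_facts := f_est_bounds e_sym e_irr (Pn_range R e_sym e_irr n.+1) adm vS v1N.

Let f_ge0 j : 0 <= f j.
Proof. by have [f_bnd _ _ _] := f_facts; have /andP[] := f_bnd j. Qed.

Let f_sum : \sum_j f j = 1.
Proof. by have [] := f_facts. Qed.

Let y_reach j : reachable e (S :\ v) (restr L [:: v1; v2] 1 j) v2.
Proof. exact: y_est_reachable. Qed.

Let y_ge0 j : 0 <= y j.
Proof. by have /andP[] := Pn_range R e_sym e_irr n.+1 j (y_reach j). Qed.

Let y_le_half j : y j <= 1/2.
Proof. by have /andP[] := Pn_range R e_sym e_irr n.+1 j (y_reach j). Qed.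

Let restr_off_v1 j x : x != v1 -> restr L [:: v1; v2] 1 j x = L x.
Proof. by move=> xv1; apply: restr_notin; rewrite /= inE. Qed.

Let restr_v2 j : restr L [:: v1; v2] 1 j v2 = L v2.
Proof. by rewrite restr_off_v1 // eq_sym. Qed.

Lemma balanced_in_L1 : i \in L v1 -> balanced f y i.
Proof.
move=> iL1; apply: (balanced_of_f_ge f_ge0 f_sum y_ge0 y_le_half).
by have [_ _ _ ->] := f_facts.
Qed.

Lemma balanced_in_L2 : i \in L v2 -> balanced f y i.
Proof.
move=> iL2; apply: (balanced_of_y_ge f_ge0 f_sum y_ge0 y_le_half).
have := Pn_bounds R e_sym e_irr n.+1 (y_reach i); rewrite restr_v2 => /(_ _ iL2) /andP[+ _].
by apply: le_trans; apply: min_prob_ge.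
Qed.

Section OutsideLists.
Hypotheses (iL1 : i \notin L v1) (iL2 : i \notin L v2).

Let f_i : f i = 0.
Proof. by rewrite /f /f_est (negbTE iL1). Qed.

Let f_le_half j : f j <= 1/2.
Proof. by have [_ _ f_le _] := f_facts; apply: f_le; apply: card_le3_notin iL1. Qed.

Let y_i : y i = 0.
Proof. by rewrite /y /y_est Pn_notin // restr_v2. Qed.

Lemma balanced_leaf : nbrs e (S :\ v) v2 = [::] -> balanced f y i.
Proof.
move=> leaf.
have y_val j : y j = if j \in L v2 then #|L v2|%:R^-1 else 0.
  rewrite /y /y_est; case: ifP => jL; first by rewrite Pn_nil // restr_v2.
  by rewrite Pn_notin // restr_v2 jL.
have [_ [_ [_ card_ge]]] := reachable_nbr e_sym e_irr adm vS v2N.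
have Lv2_ge : (2 <= #|L v2|)%N by move: card_ge; rewrite /deg leaf.
have Lv2_le := card_le3_notin iL2.
have [Lv2|Lv2] : #|L v2| = 2%N \/ #|L v2| = 3%N by lia.
- apply: (balanced_of_bonus (b := 1/2) (B := ~: L v2) f_ge0 f_sum) => //; first lra.
  + have := cardsC (L v2); rewrite card_ord Lv2 (cardsD1 i) inE iL2 add1n => card4.
    set k := #|_| in card4 *; have -> : k = 1%N by lia.
    lra.
  + by move=> j _; rewrite y_val inE Lv2; case: (j \in L v2) => /=; lra.
- apply: (balanced_of_uniform (t := 2/3) f_ge0 f_sum) => //; first lra.
  by move=> j _; rewrite y_val Lv2; case: (j \in L v2); lra.
Qed.

Section Path.
Variable w : T.
Hypothesis v2w : nbrs e (S :\ v) v2 = [:: w].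

Let Q j c := Pn R e n (S :\ v :\ v2) (restr L [:: v1; v2] 1 j) w c.

Let restr_w j : restr L [:: v1; v2] 1 j w = L w.
Proof.
apply: restr_off_v1; apply: contraNneq nadj => <-.
by have := mem_head w [::]; rewrite -v2w mem_nbrs e_sym => /andP[].
Qed.

Let w_reach j : reachable e (S :\ v :\ v2) (restr L [:: v1; v2] 1 j) w.
Proof.
have [v2S _] := y_reach j.
apply: (reachable_nbr e_sym e_irr _ v2S); last by rewrite v2w mem_head.
by apply: (admissible_restr e_sym _ _ adm vS) => x; rewrite !inE => /orP[] /eqP ->.
Qed.

Let Q_bounds j c : 0 <= Q j c <= 1/2.
Proof. exact: Pn_range. Qed.

Let Q_ge j c : c \in L w -> min_prob R #|L w| <= Q j c.
Proof.
have := Pn_bounds R e_sym e_irr n (w_reach j) (c := c).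
by rewrite restr_w => bnd /bnd /andP[].
Qed.

Let card_Lw : (2 <= #|L w| <= 4)%N.
Proof. by have := reachable_card (w_reach i); rewrite restr_w. Qed.

Let card_Lv2 : #|L v2| = 3%N.
Proof.
have [_ [_ [_ card_ge]]] := reachable_nbr e_sym e_irr adm vS v2N.
have : (3 <= #|L v2|)%N by move: card_ge; rewrite /deg v2w.
by have := card_le3_notin iL2; lia.
Qed.

Let y_path j : j != i -> y j = (1 - Q j j) / (2 + Q j i).
Proof.
move=> ji; rewrite /y /y_est (Pn_deg1_card3 R n (d := i) _ v2w) ?restr_v2 //.
exact: card3_mem iL2 card_Lv2 ji.
Qed.

Lemma balanced_path : balanced f y i.
Proof.
have [iLw|iLw] := boolP (i \in L w).
- apply: (balanced_of_uniform (t := 6/11) f_ge0 f_sum) => //; first lra.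
  move=> j ji; rewrite y_path //.
  have /andP[q_ge0 _] := Q_bounds j j; have /andP[r_ge0 _] := Q_bounds j i.
  have r_ge := Q_ge j iLw.
  suff : (1 - Q j j) / (2 + Q j i) <= 5/11 by lra.
  rewrite ler_pdivrMr; last lra.
  have [Lw_le3|Lw_gt3] := leqP #|L w| 3.
    have := @min_prob_ge_small R #|L w|; rewrite Lw_le3 andbT (andP card_Lw).1.
    by move=> /(_ isT); lra.
  have Lw4 : #|L w| = 4%N by apply/eqP; rewrite eqn_leq card_le4.
  have q_ge := Q_ge j (card4_mem j Lw4).
  by rewrite Lw4 /min_prob /= in q_ge r_ge; lra.
- have Q_i j : Q j i = 0 by rewrite /Q Pn_notin // restr_w.
  have y_val j : j != i -> y j = (1 - Q j j) / 2 by move=> ji; rewrite y_path // Q_i addr0.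
  have [Lw2|Lw3] : #|L w| = 2%N \/ #|L w| = 3%N by have := card_le3_notin iLw; lia.
  + apply: (balanced_of_bonus (b := 1/4) (B := L w) f_ge0 f_sum) => //; first lra.
      have := cardsD1 i (L w); rewrite (negbTE iLw) add0n Lw2.
      by set k := #|_|; move=> <-; lra.
    move=> j ji; rewrite y_val //; have /andP[q_ge0 _] := Q_bounds j j.
    have [jLw|_] := boolP (j \in L w); last by rewrite mulr0; lra.
    by have := Q_ge j jLw; rewrite Lw2 /min_prob /=; lra.
  + apply: (balanced_of_uniform (t := 3/5) f_ge0 f_sum) => //; first lra.
    move=> j ji; rewrite y_val //.
    by have := Q_ge j (card3_mem iLw Lw3 ji); rewrite Lw3 /min_prob /=; lra.
Qed.

End Path.

End OutsideLists.

Lemma balanced_deg2 : balanced f y i.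
Proof.
have [iL1|iL1] := boolP (i \in L v1); first exact: balanced_in_L1.
have [iL2|iL2] := boolP (i \in L v2); first exact: balanced_in_L2.
have deg_v2 : (deg e (S :\ v) v2 <= 1)%N.
  have v1S : v1 \in S by move: v1N; rewrite mem_nbrs => /andP[].
  have [_ card_ge] := adm v1S; have := card_le3_notin iL1.
  by have := deg21; rewrite (deg_setD1 (mem_nbrs_sym e_sym vS v2N)); lia.
move: deg_v2; rewrite /deg.
case v2N': (nbrs e (S :\ v) v2) => [|w [|? ?]] // _.
- exact: balanced_leaf.
- exact: balanced_path v2N'.
Qed.

Lemma ratio_deg2_le_13_27 :
  (1 - f i) * (1 - y i) / \sum_j (1 - f j) * (1 - y j) <= 13%:R / 27%:R.
Proof. exact (ratio_le_13_27 f_ge0 f_sum y_ge0 y_le_half balanced_deg2). Qed.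

End Deg2.

Unset Implicit Arguments.

Theorem proposition10 (R : realFieldType) (T : finType) (e : rel T)
  (e_sym : symmetric e) (e_irr : irreflexive e)
  (S : {set T}) (L : T -> {set 'I_4}) (v : T) (i : 'I_4) :
  reachable e S L v -> deg e S v = 2%N ->
  triangle_at e S v \/
  (forall D : int, 2 <= D -> P R e S L v i D <= 13%:R / 27%:R).
Proof.
move=> reach deg_v; have [vS [adm [_ card_ge]]] := reach.
have Lv4 : #|L v| = 4%N by have := card_le4 (L v); rewrite deg_v in card_ge; lia.
have [iL|iL] := boolP (i \in L v); last by right=> D _; rewrite /P Pn_notin //; lra.
have [a [b vN]] : exists a b, nbrs e S v = [:: a; b].
  by move: deg_v; rewrite /deg; case: (nbrs e S v) => [|a [|b []]] // _; exists a, b.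
have [v1 [v2 [v1N v2N v12 deg21 Pn_eq]]] := Pn_deg2 R iL vN.
have [e12|ne12] := boolP (e v1 v2); first by left; exists v1, v2.
right=> -[n|//] le2n; rewrite /P.
case: n le2n => [|[|n]] // _.
rewrite Pn_eq (sum_card4 _ Lv4).
exact: ratio_deg2_le_13_27.
Qed.
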